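(* Let $n\ge 2$, $N=\{1,\dots,n\}$, for each $i\in N$ let $A_i$ be a nonempty finite set, $A=\prod_{i\in N}A_i$, $u_i:A\to\mathbb{R}$, $u(a)=(u_i(a))_{i\in N}$, let $\Delta\in(0,1]$ and $\lambda\in\mathbb{R}^n\setminus\{\mathbf 0\}$. If $\mathcal{A}^*_\lambda(\Delta)\subseteq S^C$, then for every $u^{[n]}\in\mathcal{U}^*_\lambda(\Delta)$ there exists $m\in\{1,\dots,n-1\}$ such that $$-\sum_{k=1}^m\Delta^{k-1}w_k(u^{[n]})+\sum_{k=1}^m\Delta^{k-1}w_{n-m+k}(u^{[n]})<0.$$
   Context: For $a^{[n]}=(a^1,\dots,a^n)\in A^n$ extend indices by $a^s=a^{s-n}$ for $s\ge n+1$, and define $$v_i^\Delta(a^{[n]})=\frac{\sum_{k=1}^n\Delta^{k-1}u_i(a^{i+k-1})}{\sum_{k=1}^n\Delta^{k-1}},\qquad W_\lambda(a^{[n]},\Delta)=\sum_{i=1}^n\lambda_i v_i^\Delta(a^{[n]}).$$ $\mathcal{A}^*_\lambda(\Delta)\subseteq A^n$ is the set of maximizers of $W_\lambda(\cdot,\Delta)$ over $A^n$, and $\mathcal{U}^*_\lambda(\Delta)=\{(u(a^1),\dots,u(a^n)):(a^1,\dots,a^n)\in\mathcal{A}^*_\lambda(\Delta)\}$. $S^0=\{a^{[n]}\in A^n: u(a^1)=u(a^2)=\dots=u(a^n)\}$ and $S^C=A^n\setminus S^0$. For $u^{[n]}=(u^1,\dots,u^n)$ with $u^k\in\mathbb{R}^n$,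 extend indices by $u^m=u^{m-n}$ for $m>n$ and set $w_k(u^{[n]})=\sum_{i=1}^n\lambda_iu_i^{i+k-1}$ for $k=1,\dots,n$. *)

(* reals abstracted as R : realType. Indices 1..n are 0..n-1. *)
From mathcomp Require Import all_boot all_order all_algebra.
From mathcomp Require Import reals.
Set Implicit Arguments. Unset Strict Implicit. Unset Printing Implicit Defensive.
Import Order.TTheory GRing.Theory Num.Theory.
Local Open Scope ring_scope.

Lemma ord_pos (n : nat) (i : 'I_n) : (0 < n)%N.
Proof. exact: (leq_ltn_trans (leq0n i) (ltn_ord i)). Qed.

(* cyclic index: (i + k) mod n, i.e. the paper's index i+k with a^s = a^{s-n} *)
Definition shift (n : nat) (i : 'I_n) (k : nat) : 'I_n :=
  Ordinal (ltn_pmod (i + k) (ord_pos i)).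

Section Defs.
Variables (R : realType) (n : nat) (A : finType) (u : 'I_n -> A -> R).

(* v_i^Delta(a^[n]) (0-based: k0 = k-1) *)
Definition vD (D : R) (a : 'I_n -> A) (i : 'I_n) : R :=
  (\sum_(k < n) D ^+ k * u i (a (shift i k))) / (\sum_(k < n) D ^+ k).

Definition W (lam : 'I_n -> R) (a : 'I_n -> A) (D : R) : R :=
  \sum_(i < n) lam i * vD D a i.

Definition Astar (lam : 'I_n -> R) (D : R) (a : 'I_n -> A) : Prop :=
  forall b : 'I_n -> A, W lam b D <= W lam a D.

Definition uprof (a : 'I_n -> A) : 'M[R]_n := \matrix_(k, i) u i (a k).

Definition Ustar (lam : 'I_n -> R) (D : R) (U : 'M[R]_n) : Prop :=
  exists a, Astar lam D a /\ U = uprof a.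

Definition S0 (a : 'I_n -> A) : Prop := forall k l : 'I_n, forall i, u i (a k) = u i (a l).
Definition SC (a : 'I_n -> A) : Prop := ~ S0 a.
End Defs.

(* w_k(u^[n]) with 0-based k (paper's w_{k+1}); U k i = u_i^k *)
Definition w (R : realType) (n : nat) (lam : 'I_n -> R) (U : 'M[R]_n) (k : nat) : R :=
  \sum_(i < n) lam i * U (shift i k) i.

From mathcomp Require Import all_boot all_order all_algebra.
From mathcomp Require Import reals.
From mathcomp Require Import ring lra.
Set Implicit Arguments. Unset Strict Implicit. Unset Printing Implicit Defensive.
Import Order.TTheory GRing.Theory Num.Theory.
Local Open Scope ring_scope.

(* Fix an optimal profile a and put x_k = w_k(u(a)), an n-periodic sequence, and
   V_r = sum_(k < n) D^k x_(k+r). Up to the factor sum_(k < n) D^k, V_r is the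
   welfare of a shifted cyclically by r, so optimality gives V_r <= V_0.
   Telescoping V_r - D^m V_(r+m) = (1 - D^n) sum_(k < m) D^k x_(r+k) at r = 0 and
   r = n - m shows that the required inequality for m follows from V_m < V_0.
   Such an m exists: the V_r average to sum_k D^k times the mean of the stage
   welfares sum_i lam_i u_i(a^l), so if every V_r were V_0, the constant profile
   at some a^l would be optimal, although it lies in S^0. *)

Lemma shiftD n (i : 'I_n) k r : shift (shift i k) r = shift i (k + r).
Proof. by apply: val_inj => /=; rewrite modnDml addnA. Qed.

Lemma shift_addn n (i : 'I_n) k : shift i (k + n) = shift i k.
Proof. by apply: val_inj => /=; rewrite addnA modnDr. Qed.

Lemma sum_shift (V : nmodType) n (F : 'I_n -> V) (i : 'I_n) :
  \sum_(k < n) F (shift i k) = \sum_(k < n) F k.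
Proof.
have shift_inj : injective (fun k : 'I_n => shift i k).
  move=> k l /(congr1 val) /= /eqP; rewrite eqn_modDl !modn_small //.
  by move=> /eqP; apply: val_inj.
by rewrite [RHS](reindex_inj shift_inj).
Qed.

Definition periodic (T : Type) n (f : nat -> T) := forall k, f (k + n)%N = f k.

Lemma sum_periodic_window (V : nmodType) n (f : nat -> V) k :
  periodic n f -> \sum_(r < n) f (k + r)%N = \sum_(r < n) f r.
Proof.
case: n f => [|n] f f_per; first by rewrite !big_ord0.
elim: k => [|k IHk]; first by under eq_bigr do rewrite add0n.
rewrite -IHk big_ord_recr [RHS]big_ord_recl /= addn0 addSnnS f_per addrC.
by congr (_ + _); apply: eq_bigr => r _; rewrite addSnnS.
Qed.

Definition discounted_sum (R : pzSemiRingType) n (D : R) (f : nat -> R) r :=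
  \sum_(k < n) D ^+ k * f (k + r)%N.

Section DiscountedSum.
Variables (R : comPzRingType) (n : nat) (D : R) (f : nat -> R).
Hypothesis f_per : periodic n f.
Local Notation V := (discounted_sum n D f).

Lemma discounted_sum_addn r : V (r + n) = V r.
Proof. by apply: eq_bigr => k _; rewrite addnA f_per. Qed.

Lemma discounted_sumS r : V r - D * V r.+1 = (1 - D ^+ n) * f r.
Proof.
rewrite /discounted_sum; case: n f_per => [|m] per.
  by rewrite !big_ord0 expr0 mulr0 !subrr mul0r.
rewrite big_ord_recl big_ord_recr /= add0n expr0 addnS -addSn addnC per.
under eq_bigr do rewrite /bump /= add1n exprS addSnnS -mulrA.
by rewrite -mulr_sumr exprS; set s := \sum_(i < m) _; ring.
Qed.

Lemma discounted_sum_telescope m r :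
  V r - D ^+ m * V (r + m) = (1 - D ^+ n) * \sum_(k < m) D ^+ k * f (r + k)%N.
Proof.
elim: m => [|m IHm]; first by rewrite big_ord0 expr0 mul1r addn0 subrr mulr0.
rewrite big_ord_recr /= mulrDr -IHm mulrCA -discounted_sumS addnS exprSr.
ring.
Qed.

Lemma sum_discounted_sum :
  \sum_(r < n) V r = (\sum_(k < n) D ^+ k) * \sum_(r < n) f r.
Proof.
rewrite exchange_big mulr_suml; apply: eq_bigr => k _ /=.
by rewrite -mulr_sumr sum_periodic_window.
Qed.

End DiscountedSum.

Lemma discounted_gap_lt0 (R : realDomainType) n (D : R) (f : nat -> R) m :
  periodic n f -> 0 < D -> D <= 1 -> (m <= n)%N ->
  (forall r, discounted_sum n D f r <= discounted_sum n D f 0) ->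
  discounted_sum n D f m < discounted_sum n D f 0 ->
  - (\sum_(k < m) D ^+ k * f k) + \sum_(k < m) D ^+ k * f (n - m + k)%N < 0.
Proof.
move=> f_per D_gt0 D_le1 le_mn V_le V_lt.
set V := discounted_sum n D f in V_le V_lt *.
have Dn_ge0 : 0 <= 1 - D ^+ n by rewrite subr_ge0 exprn_ile1 // ltW.
have Dm_gt0 : 0 < D ^+ m by rewrite exprn_gt0.
have head : V 0 - D ^+ m * V m = (1 - D ^+ n) * \sum_(k < m) D ^+ k * f k.
  have := discounted_sum_telescope D f_per m 0; rewrite add0n.
  by under eq_bigr do rewrite add0n.
have V_n : V n = V 0 by have := discounted_sum_addn D f_per 0; rewrite add0n.
have tail := discounted_sum_telescope D f_per m (n - m).
rewrite -/V subnK // V_n in tail.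
have gap : (1 - D ^+ n) * (- (\sum_(k < m) D ^+ k * f k)
    + \sum_(k < m) D ^+ k * f (n - m + k)%N) < 0.
  rewrite mulrDr mulrN -head -tail.
  have := V_le (n - m)%N; move: V_lt; rewrite -(ltr_pM2l Dm_gt0); lra.
by apply: contraTT gap; rewrite -!leNgt; exact: mulr_ge0.
Qed.

Lemma ltr_sum_ord (R : numDomainType) n (F G : 'I_n -> R) :
  (0 < n)%N -> (forall i, F i < G i) -> \sum_(i < n) F i < \sum_(i < n) G i.
Proof.
move=> n_gt0 lt_FG; apply: ltr_sum => [|i _]; last exact: lt_FG.
by apply/hasP; exists (Ordinal n_gt0); rewrite ?mem_index_enum.
Qed.

Lemma sum_powers_gt0 (R : numDomainType) n (D : R) :
  0 < D -> (0 < n)%N -> 0 < \sum_(k < n) D ^+ k.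
Proof.
move=> D_gt0 n_gt0; apply: le_lt_trans (ltr_sum_ord (F := fun=> 0) n_gt0 _).
  by rewrite big1.
by move=> k; exact: exprn_gt0.
Qed.

Lemma exists_lt_of_sum_lt (R : realDomainType) n (F : 'I_n -> R) c :
  \sum_(i < n) F i < \sum_(i < n) c -> exists i, F i < c.
Proof.
move=> sum_lt; apply/existsP; apply: contraLR sum_lt.
rewrite negb_exists -leNgt => /forallP F_ge.
by apply: ler_sum => i _; rewrite leNgt.
Qed.

Definition cshift n (T : Type) (a : 'I_n -> T) r : 'I_n -> T :=
  fun j => a (shift j r).

Section Welfare.
Variables (R : realType) (n : nat) (A : finType) (u : 'I_n -> A -> R).
Variables (lam : 'I_n -> R) (D : R).

Definition weighted_payoff (c : A) := \sum_(i < n) lam i * u i c.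

Lemma w_periodic (U : 'M[R]_n) : periodic n (w lam U).
Proof. by move=> k; apply: eq_bigr => i _; rewrite shift_addn. Qed.

Lemma sum_w_uprof a :
  \sum_(k < n) w lam (uprof u a) k = \sum_(l < n) weighted_payoff (a l).
Proof.
rewrite exchange_big [RHS]exchange_big; apply: eq_bigr => i _ /=.
rewrite -!mulr_sumr; congr (_ * _).
by under eq_bigr do rewrite mxE; rewrite (sum_shift (fun l => u i (a l))).
Qed.

Lemma w_uprof_cshift a r k :
  w lam (uprof u (cshift a r)) k = w lam (uprof u a) (k + r).
Proof. by apply: eq_bigr => i _; rewrite !mxE /cshift shiftD. Qed.

Lemma W_uprof a :
  W u lam a D
  = discounted_sum n D (w lam (uprof u a)) 0 / \sum_(k < n) D ^+ k.
Proof.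
rewrite /W /vD /discounted_sum; under eq_bigr do rewrite mulrA.
rewrite -mulr_suml; congr (_ * _).
under eq_bigr do rewrite mulr_sumr; rewrite exchange_big /=.
apply: eq_bigr => k _; rewrite addn0 mulr_sumr.
by apply: eq_bigr => i _; rewrite !mxE mulrCA.
Qed.

Lemma W_const c :
  \sum_(k < n) D ^+ k != 0 -> W u lam (fun=> c) D = weighted_payoff c.
Proof.
move=> S_neq0; apply: eq_bigr => i _; congr (_ * _).
by rewrite /vD -mulr_suml mulrC mulKf.
Qed.

Lemma Astar_const a c :
  0 < \sum_(k < n) D ^+ k -> Astar u lam D a ->
  W u lam a D <= weighted_payoff c -> Astar u lam D (fun=> c).
Proof.
move=> S_gt0 a_opt le_ac b; rewrite W_const ?gt_eqF //.
exact: le_trans (a_opt b) le_ac.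
Qed.

Lemma Astar_discounted_sum_le a r :
  0 < \sum_(k < n) D ^+ k -> Astar u lam D a ->
  discounted_sum n D (w lam (uprof u a)) r
  <= discounted_sum n D (w lam (uprof u a)) 0.
Proof.
move=> S_gt0 a_opt; set S := \sum_(k < n) D ^+ k.
have -> : discounted_sum n D (w lam (uprof u a)) r
    = discounted_sum n D (w lam (uprof u (cshift a r))) 0.
  by apply: eq_bigr => k _; rewrite w_uprof_cshift addn0.
by rewrite -(ler_pM2r (x := S^-1)) ?invr_gt0 // -!W_uprof.
Qed.

End Welfare.

Theorem lemma5 (R : realType) (n : nat) (Ai : 'I_n -> finType)
  (u : 'I_n -> {dffun forall i : 'I_n, Ai i} -> R) (D : R) (lam : 'I_n -> R) :
  (2 <= n)%N ->
  (forall i, (0 < #|Ai i|)%N) ->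
  0 < D -> D <= 1 ->
  (exists i, lam i != 0) ->
  (forall a, Astar u lam D a -> SC u a) ->
  forall U : 'M[R]_n, Ustar u lam D U ->
  exists m : nat, [/\ (1 <= m)%N, (m <= n - 1)%N &
    - (\sum_(k < m) D ^+ k * w lam U k)
      + \sum_(k < m) D ^+ k * w lam U (n - m + k)%N < 0].
Proof.
move=> n_ge2 _ D_gt0 D_le1 _ opt_SC _ [a [a_opt ->]].
have n_gt0 : (0 < n)%N by apply: leq_trans n_ge2.
have S_gt0 := sum_powers_gt0 D_gt0 n_gt0.
set V := discounted_sum n D (w lam (uprof u a)).
have payoff_lt l : (\sum_(k < n) D ^+ k) * weighted_payoff u lam (a l) < V 0.
  rewrite mulrC -ltr_pdivlMr // -W_uprof ltNge; apply/negP.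
  by move=> /(Astar_const S_gt0 a_opt) /opt_SC; apply.
have [r Vr_lt] : exists r : 'I_n, V r < V 0.
  apply: exists_lt_of_sum_lt.
  rewrite sum_discounted_sum; last exact: w_periodic.
  by rewrite sum_w_uprof mulr_sumr; apply: ltr_sum_ord.
exists r; split.
- by rewrite lt0n; apply: contraTneq Vr_lt => r0; rewrite r0 ltxx.
- by rewrite leq_subRL ?add1n ?ltn_ord // (leq_trans _ n_ge2).
- apply: discounted_gap_lt0 => //; first exact: w_periodic.
  + exact: ltnW.
  + by move=> s; apply: Astar_discounted_sum_le.
Qed.
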